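(* Let $\Phi\in\Lambda$, let $n<N$, and let $\Xi$ be the set of designs $\{(\boldsymbol{x}_i,w_i)\}$ with $0\le w_i\le1/n$ and $\sum_iw_i=1$. Let $\xi=\{(\boldsymbol{x}_i,w_i)\}\in\Xi$ with $\Phi(\xi)<\infty$, and let $\mathcal{X}_1=\{\boldsymbol{x}_i:w_i=0\}$, $\mathcal{X}_3=\{\boldsymbol{x}_i:w_i=1/n\}$, $\mathcal{X}_2=\{\boldsymbol{x}_i:0<w_i<1/n\}$. Assume that if $\mathcal{X}_2\ne\emptyset$ then $F_\Phi(\xi;\boldsymbol{x}_i)=s$ for a common value $s$ for all $\boldsymbol{x}_i\in\mathcal{X}_2$. Let $\boldsymbol{x}_{1*}\in\arg\min_{\boldsymbol{x}_i\in\mathcal{X}_1}F_\Phi(\xi;\boldsymbol{x}_i)$ and $\boldsymbol{x}_{3*}\in\arg\max_{\boldsymbol{x}_i\in\mathcal{X}_3}F_\Phi(\xi;\boldsymbol{x}_i)$ (when the respective sets are nonempty). Suppose there exist $\xi_0\in\Xi$ and $\delta>0$ with $\Phi(\xi)-\Phi(\xi_0)>\delta$. Then: (a) if $\mathcal{X}_2=\emptyset$, then $F_\Phi(\xi;\boldsymbol{x}_{1*})-F_\Phi(\xi;\boldsymbol{x}_{3*})\le-\delta$; (b) if $\mathcal{X}_2\ne\emptyset$ and $\mathcal{X}_1=\emptyset$, then $\mathcal{X}_3\neq\emptyset$ and $F_\Phi(\xi;\boldsymbol{x}_{3*})-s\ge\delta$; (c) if $\mathcal{X}_2\ne\emptyset$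 and $\mathcal{X}_3=\emptyset$, then $\mathcal{X}_1\neq\emptyset$ and $F_\Phi(\xi;\boldsymbol{x}_{1*})-s\le-\delta$; (d) if $\mathcal{X}_1,\mathcal{X}_2,\mathcal{X}_3$ are all nonempty, then $F_\Phi(\xi;\boldsymbol{x}_{1*})-s\le-\delta/2$ or $F_\Phi(\xi;\boldsymbol{x}_{3*})-s\ge\delta/2$.
   Context: Designs $\xi=\{(\boldsymbol{x}_i,w_i)\}$ on $\mathcal{X}=\{\boldsymbol{x}_1,\ldots,\boldsymbol{x}_N\}$, $w_i\ge0$, $\sum w_i=1$; $M(\xi)=\sum_iw_iI_{\boldsymbol\theta}(\boldsymbol{x}_i)$ with symmetric PSD $I_{\boldsymbol\theta}(\boldsymbol{x}_i)$; $\Phi(\xi)$ is a criterion of $M(\xi)$ ($+\infty$ when undefined). $F_\Phi(\xi,\eta)=\lim_{\alpha\downarrow0}[\Phi((1-\alpha)\xi+\alpha\eta)-\Phi(\xi)]/\alpha$; $F_\Phi(\xi;\boldsymbol{x}_i)=F_\Phi(\xi,\delta_{\boldsymbol{x}_i})$ with $\delta_{\boldsymbol{x}_i}$ the one-point design at $\boldsymbol{x}_i$. $\Lambda$: criteria convex in the weights, linearly differentiable ($F_\Phi(\xi,\eta)=\sum_i\lambda_iF_\Phi(\xi;\boldsymbol{x}_i)$ for $\eta=\{(\boldsymbol{x}_i,\lambda_i)\}$ whenever $\Phi(\xi)<\infty$), and infinitely differentiable along line segments of designs. *)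

From HB Require Import structures.
From mathcomp Require Import all_boot all_order all_algebra.
From mathcomp Require Import all_classical all_reals all_analysis.
Set Implicit Arguments. Unset Strict Implicit. Unset Printing Implicit Defensive.
Import Order.TTheory GRing.Theory Num.Theory.
Import numFieldNormedType.Exports.
Local Open Scope classical_set_scope.
Local Open Scope ring_scope.

Section Designs.
Variables (R : realType) (N : nat).

(* A design on X = {x_1,...,x_N} is identified with its weight vector. *)
Definition is_design (w : 'I_N -> R) : Prop :=
  (forall i, 0 <= w i) /\ \sum_(i < N) w i = 1.

Definition is_bdesign (n : nat) (w : 'I_N -> R) : Prop :=
  is_design w /\ (forall i, w i <= n%:R^-1).

Definition seg (w v : 'I_N -> R) (a : R) : 'I_N -> R :=
  fun i => (1 - a) * w i + a * v i.

Definition dirac_design (i : 'I_N) : 'I_N -> R := fun j => (j == i)%:R.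

Definition infmx (p : nat) (I : 'I_N -> 'M[R]_p) (w : 'I_N -> R) : 'M[R]_p :=
  \sum_(i < N) w i *: I i.

Definition symPSD (p : nat) (A : 'M[R]_p) : Prop :=
  A^T = A /\ forall v : 'cV[R]_p, 0 <= (v^T *m A *m v) 0 0.

Definition crit (p : nat) (I : 'I_N -> 'M[R]_p) (phi : 'M[R]_p -> \bar R)
  (w : 'I_N -> R) : \bar R := phi (infmx I w).

Definition dquot (Phi : ('I_N -> R) -> \bar R) (w v : 'I_N -> R) (a : R) : \bar R :=
  ((Phi (seg w v a) - Phi w) * (a^-1)%:E)%E.

Definition Fdir (Phi : ('I_N -> R) -> \bar R) (w v : 'I_N -> R) : R :=
  fine (lim (dquot Phi w v @ at_right 0)).

Definition Fpt (Phi : ('I_N -> R) -> \bar R) (w : 'I_N -> R) (i : 'I_N) : R :=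
  Fdir Phi w (dirac_design i).

Definition in_Lambda (Phi : ('I_N -> R) -> \bar R) : Prop :=
  (forall w, is_design w -> Phi w != -oo%E) /\
  (forall w v a, is_design w -> is_design v -> 0 <= a <= 1 ->
     (Phi (seg w v a) <= (1 - a)%:E * Phi w + a%:E * Phi v)%E) /\
  (forall w v, is_design w -> is_design v -> (Phi w < +oo)%E ->
     dquot Phi w v @ at_right 0 --> (\sum_(i < N) v i * Fpt Phi w i)%:E) /\
  (forall w v (a0 : R), is_design w -> is_design v -> 0 < a0 < 1 ->
     (\forall a \near a0, (Phi (seg w v a) < +oo)%E) ->
     forall k : nat,
       derivable (derive1n k (fun a => fine (Phi (seg w v a)))) a0 1).

End Designs.

From HB Require Import structures.
From mathcomp Require Import all_boot all_order all_algebra.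
From mathcomp Require Import all_classical all_reals all_analysis.
From mathcomp Require Import ring lra.
Set Implicit Arguments. Unset Strict Implicit. Unset Printing Implicit Defensive.
Import Order.TTheory GRing.Theory Num.Theory.
Import numFieldNormedType.Exports.
Local Open Scope ring_scope.

(* Convexity of Phi along the segment from xi to xi0 bounds the directional
   derivative F(xi, xi0) by Phi(xi0) - Phi(xi) < -delta, and linear
   differentiability (with F(xi, xi) = 0) writes it as
   sum_i (w0_i - w_i) F(xi; x_i).  The weights w0 - w sum to zero, so F may be
   shifted by any constant c that it takes on X2; what remains is a sum over X1
   with nonnegative weights w0_i and a sum over X3 with nonpositive weights
   w0_i - 1/n, each of total mass at most 1.  Bounding F on X1 from below by its
   minimum and on X3 from above by its maximum gives the four cases. *)

Lemma seg_design (R : realType) N (w v : 'I_N -> R) a :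
  is_design w -> is_design v -> 0 <= a <= 1 -> is_design (seg w v a).
Proof.
move=> [w_ge0 w_sum] [v_ge0 v_sum] /andP[a_ge0 a_le1]; split.
  by move=> i; rewrite /seg addr_ge0 // mulr_ge0 // subr_ge0.
rewrite /seg big_split /= -!mulr_sumr w_sum v_sum; ring.
Qed.

Lemma seg_id (R : realType) N (w : 'I_N -> R) a : seg w w a = w.
Proof. by apply: funext => i; rewrite /seg; ring. Qed.

Section DirectionalDerivative.
Variables (R : realType) (N : nat) (Phi : ('I_N -> R) -> \bar R).
Hypothesis HLam : in_Lambda Phi.
Variable w : 'I_N -> R.
Hypotheses (Hw : is_design w) (Hfin : (Phi w < +oo)%E).

Lemma Phi_finE : Phi w = (fine (Phi w))%:E.
Proof. by have [Hnoo _] := HLam; rewrite fineK // fin_numE Hnoo // lt_eqF. Qed.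

Lemma sum_Fpt_self : \sum_i w i * Fpt Phi w i = 0.
Proof.
have [_ [_ [Hder _]]] := HLam.
have Hq : dquot Phi w w = fun=> 0%E.
  by apply: funext => a; rewrite /dquot seg_id Phi_finE subee ?mul0e.
apply: EFin_inj; apply: (cvg_unique (@ereal_hausdorff R) (Hder _ _ Hw Hw Hfin)).
by rewrite Hq; exact: cvg_cst.
Qed.

Lemma dquot_le_diff v a : is_design v -> 0 < a <= 1 ->
  (dquot Phi w v a <= Phi v - Phi w)%E.
Proof.
have [Hnoo [Hconv _]] := HLam.
move=> Hv /andP[a_gt0 a_le1]; have a01 : 0 <= a <= 1 by rewrite ltW.
move: (Hconv _ _ _ Hw Hv a01) (Hnoo _ (seg_design Hw Hv a01)) (Hnoo _ Hv).
rewrite /dquot Phi_finE; set pw := fine (Phi w).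
case: (Phi v) => [pv| |] //=; last by rewrite leey.
case: (Phi (seg w v a)) => [r| |] //=.
rewrite -!EFinM -!EFinD !lee_fin => convex _ _.
by rewrite ler_pdivrMr // lerBlDl; move: convex; congr (_ <= _); ring.
Qed.

Lemma sum_Fpt_le v : is_design v ->
  ((\sum_i v i * Fpt Phi w i)%:E <= Phi v - Phi w)%E.
Proof.
have [_ [_ [Hder _]]] := HLam.
move=> Hv; have Hq := Hder _ _ Hw Hv Hfin.
rewrite -(cvg_lim (@ereal_hausdorff R) Hq).
apply: lime_le; first by apply/cvg_ex; eexists; exact: Hq.
near=> a; apply: dquot_le_diff => //.
by apply/andP; split; near: a; [exact: nbhs_right_gt | exact: nbhs_right_le].
Unshelve. all: by end_near.
Qed.

End DirectionalDerivative.

Lemma sum_Fpt_shift_lt (R : realType) N (Phi : ('I_N -> R) -> \bar R)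
    (w w0 : 'I_N -> R) (delta : R) :
  in_Lambda Phi -> is_design w -> is_design w0 -> (Phi w < +oo)%E ->
  (Phi w - Phi w0 > delta%:E)%E ->
  \sum_i (w0 i - w i) * Fpt Phi w i < - delta.
Proof.
move=> HLam Hw Hw0 Hfin Hgap.
have := sum_Fpt_le HLam Hw Hfin Hw0.
rewrite (Phi_finE HLam Hw Hfin) in Hgap *.
move: Hgap (HLam.1 _ Hw0); case: (Phi w0) => [p0| |] //= + _.
rewrite -EFinB !lee_fin lte_fin => Hgap Hle.
have -> : \sum_i (w0 i - w i) * Fpt Phi w i =
    \sum_i w0 i * Fpt Phi w i - \sum_i w i * Fpt Phi w i.
  by rewrite -sumrB; apply: eq_bigr => i _; ring.
rewrite sum_Fpt_self // subr0; lra.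
Qed.

Lemma lt_mulr_unit (R : realDomainType) (c a D : R) :
  c < 0 -> c < a -> 0 <= D <= 1 -> c < a * D.
Proof.
move=> c_lt0 c_lt_a /andP[D_ge0 D_le1].
have [a_ge0|a_lt0] := leP 0 a; first by rewrite (lt_le_trans c_lt0) ?mulr_ge0.
by rewrite (lt_le_trans c_lt_a) // ler_nMr // ltW.
Qed.

Lemma le_of_mulr_unit_lt (R : realDomainType) (c a D : R) :
  c < 0 -> a * D < c -> 0 <= D <= 1 -> a <= c.
Proof.
move=> c_lt0 aD_lt_c D01; rewrite leNgt; apply/negP => /(lt_mulr_unit c_lt0).
by move=> /(_ _ D01)/(lt_trans aD_lt_c); rewrite ltxx.
Qed.

Lemma le_of_mulr_unit_add_lt (R : realDomainType) (c a b D E : R) :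
  c < 0 -> a * D + b * E < c + c -> 0 <= D <= 1 -> 0 <= E <= 1 ->
  a <= c \/ b <= c.
Proof.
move=> c_lt0 sum_lt D01 E01.
have [a_le|c_lt_a] := leP a c; first by left.
have [b_le|c_lt_b] := leP b c; first by right.
have := ltrD (lt_mulr_unit c_lt0 c_lt_a D01) (lt_mulr_unit c_lt0 c_lt_b E01).
by move=> /(lt_trans sum_lt); rewrite ltxx.
Qed.

Section BoundedDesigns.
Variables (R : realType) (N n : nat) (w w0 : 'I_N -> R).
Hypotheses (Hn0 : (0 < n)%N) (Hw : is_bdesign n w) (Hw0 : is_bdesign n w0).

Let ninv_gt0 : 0 < n%:R^-1 :> R.
Proof. by rewrite invr_gt0 ltr0n. Qed.

Definition low_mass := \sum_(i | w i == 0) w0 i.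
Definition high_deficit := \sum_(i | w i == n%:R^-1) (n%:R^-1 - w0 i).

Lemma low_mass_unit : 0 <= low_mass <= 1.
Proof.
have [[_ _] _] := Hw; have [[w0_ge0 w0_sum] _] := Hw0.
rewrite sumr_ge0 //= -w0_sum [leRHS](bigID (fun i => w i == 0)) /= lerDl.
exact: sumr_ge0.
Qed.

Lemma high_deficit_unit : 0 <= high_deficit <= 1.
Proof.
have [[w_ge0 w_sum] _] := Hw; have [[w0_ge0 _] w0_le] := Hw0.
rewrite sumr_ge0 => [|i _]; last by rewrite subr_ge0.
rewrite -w_sum [leRHS](bigID (fun i => w i == n%:R^-1)) /=.
apply: ler_wpDr; first exact: sumr_ge0.
by apply: ler_sum => i /eqP ->; rewrite gerBl.
Qed.

Lemma sum_shift_ge (F : 'I_N -> R) (c a b : R) :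
  (forall i, w i = 0 -> a <= F i - c) ->
  (forall i, w i = n%:R^-1 -> F i - c <= b) ->
  (forall i, 0 < w i < n%:R^-1 -> F i = c) ->
  a * low_mass - b * high_deficit <= \sum_i (w0 i - w i) * F i.
Proof.
have [[w_ge0 w_sum] w_le] := Hw; have [[w0_ge0 w0_sum] w0_le] := Hw0.
move=> F_low F_high F_mid.
have -> : \sum_i (w0 i - w i) * F i = \sum_i (w0 i - w i) * (F i - c).
  have -> : \sum_i (w0 i - w i) * (F i - c) =
      \sum_i (w0 i - w i) * F i - c * (\sum_i w0 i - \sum_i w i).
    by rewrite -sumrB mulr_sumr -sumrB; apply: eq_bigr => i _; ring.
  by rewrite w0_sum w_sum subrr mulr0 subr0.
rewrite /low_mass /high_deficit !mulr_sumr big_mkcond [X in _ - X]big_mkcond -sumrB.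
apply: ler_sum => i _.
have [w_i0|w_i_ne0] := eqVneq (w i) 0.
  rewrite w_i0 lt_eqF //= !subr0 mulrC.
  exact: ler_wpM2l (F_low _ w_i0).
have [w_in|w_i_nen] := eqVneq (w i) n%:R^-1.
  rewrite w_in sub0r -mulrN opprB mulrC.
  by apply: ler_wnM2l (F_high _ w_in); rewrite subr_le0.
rewrite F_mid ?subrr ?mulr0 ?subr0 //.
by rewrite !lt_def w_i_ne0 eq_sym w_i_nen w_ge0 w_le.
Qed.

Variables (F : 'I_N -> R) (c delta : R).
Hypotheses (delta_gt0 : 0 < delta)
  (gap : \sum_i (w0 i - w i) * F i < - delta)
  (F_mid : forall i, 0 < w i < n%:R^-1 -> F i = c).

Let shift_lt a b :
  (forall i, w i = 0 -> a <= F i - c) -> (forall i, w i = n%:R^-1 -> F i - c <= b) ->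
  a * low_mass - b * high_deficit < - delta.
Proof. by move=> F_low F_high; apply: le_lt_trans (sum_shift_ge F_low F_high F_mid) gap. Qed.

Let ndelta_lt0 : - delta < 0.
Proof. by rewrite oppr_lt0. Qed.

Lemma faces_nonempty : (forall i, w i <> 0) -> (forall i, w i <> n%:R^-1) -> False.
Proof.
move=> no_low no_high.
have : 0 * low_mass - 0 * high_deficit < - delta.
  by apply: shift_lt => [i /no_low | i /no_high].
by rewrite !mul0r subr0 => /(lt_trans ndelta_lt0); rewrite ltxx.
Qed.

Lemma low_face_gap a :
  (forall i, w i = 0 -> a <= F i - c) -> (forall i, w i = n%:R^-1 -> F i - c <= 0) ->
  a <= - delta.
Proof.
move=> F_low F_high; have := shift_lt F_low F_high.
by rewrite mul0r subr0 => /(le_of_mulr_unit_lt ndelta_lt0); apply; apply: low_mass_unit.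
Qed.

Lemma high_face_gap b :
  (forall i, w i = 0 -> 0 <= F i - c) -> (forall i, w i = n%:R^-1 -> F i - c <= b) ->
  delta <= b.
Proof.
move=> F_low F_high; have := shift_lt F_low F_high.
rewrite mul0r sub0r -mulNr => /(le_of_mulr_unit_lt ndelta_lt0)/(_ high_deficit_unit).
by rewrite lerN2; apply.
Qed.

Lemma faces_gap a b :
  (forall i, w i = 0 -> a <= F i - c) -> (forall i, w i = n%:R^-1 -> F i - c <= b) ->
  a <= - (delta / 2) \/ delta / 2 <= b.
Proof.
move=> F_low F_high; have := shift_lt F_low F_high.
have halves : - delta = - (delta / 2) + - (delta / 2) by rewrite -opprD -splitr.
have half_lt0 : - (delta / 2) < 0 by rewrite oppr_lt0 divr_gt0.
rewrite -mulNr halves => /(le_of_mulr_unit_add_lt half_lt0).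
move=> /(_ low_mass_unit high_deficit_unit) [|]; first by left.
by right; rewrite -lerN2.
Qed.

End BoundedDesigns.

Theorem lemma2 (R : realType) (p N n : nat)
  (I : 'I_N -> 'M[R]_p) (HI : forall i, symPSD (I i))
  (phi : 'M[R]_p -> \bar R)
  (HLam : in_Lambda (crit I phi))
  (Hn0 : (0 < n)%N) (HnN : (n < N)%N)
  (w : 'I_N -> R) (Hw : is_bdesign n w)
  (Hfin : (crit I phi w < +oo)%E)
  (s : R)
  (Hs : forall i, 0 < w i < n%:R^-1 -> Fpt (crit I phi) w i = s)
  (w0 : 'I_N -> R) (Hw0 : is_bdesign n w0)
  (delta : R) (Hdelta : 0 < delta)
  (Hgap : (crit I phi w - crit I phi w0 > delta%:E)%E) :
  let F := Fpt (crit I phi) w in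
  let X1 := fun i => w i = 0 in
  let X2 := fun i => 0 < w i < n%:R^-1 in
  let X3 := fun i => w i = n%:R^-1 in
  let argmin1 := fun i => X1 i /\ forall j, X1 j -> F i <= F j in
  let argmax3 := fun i => X3 i /\ forall j, X3 j -> F j <= F i in
  [/\ (* (a) *)
      (forall i, ~ X2 i) ->
        forall i1 i3, argmin1 i1 -> argmax3 i3 -> F i1 - F i3 <= - delta,
      (* (b) *)
      (exists i, X2 i) -> (forall i, ~ X1 i) ->
        (exists i, X3 i) /\ (forall i3, argmax3 i3 -> F i3 - s >= delta),
      (* (c) *)
      (exists i, X2 i) -> (forall i, ~ X3 i) ->
        (exists i, X1 i) /\ (forall i1, argmin1 i1 -> F i1 - s <= - delta)
    & (* (d) *)
      (exists i, X1 i) -> (exists i, X2 i) -> (exists i, X3 i) ->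
        forall i1 i3, argmin1 i1 -> argmax3 i3 ->
          F i1 - s <= - (delta / 2) \/ F i3 - s >= delta / 2].
Proof.
move=> F X1 X2 X3 argmin1 argmax3.
have gap := sum_Fpt_shift_lt HLam Hw.1 Hw0.1 Hfin Hgap.
have min_gap i1 c : argmin1 i1 -> forall j, X1 j -> F i1 - c <= F j - c.
  by move=> [_ min1] j /min1; rewrite lerD2r.
have max_gap i3 c : argmax3 i3 -> forall j, X3 j -> F j - c <= F i3 - c.
  by move=> [_ max3] j /max3; rewrite lerD2r.
have faces := faces_nonempty Hn0 Hw Hw0 Hdelta gap Hs.
split.
- move=> no_mid i1 i3 min1 max3.
  have F_mid i : X2 i -> F i = F i3 by move/no_mid.
  apply: (low_face_gap Hn0 Hw Hw0 Hdelta gap F_mid (min_gap _ _ min1)).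
  by move=> j /max3.2; rewrite subr_le0.
- move=> _ no_low; split=> [|i3 max3].
    by apply: contrapT => no_high; apply: (faces no_low) => i X3i; apply: no_high; exists i.
  by apply: (high_face_gap Hn0 Hw Hw0 Hdelta gap Hs _ (max_gap _ _ max3)) => j /no_low.
- move=> _ no_high; split=> [|i1 min1].
    by apply: contrapT => no_low; apply: (faces^~ no_high) => i X1i; apply: no_low; exists i.
  by apply: (low_face_gap Hn0 Hw Hw0 Hdelta gap Hs (min_gap _ _ min1)) => j /no_high.
- move=> _ _ _ i1 i3 min1 max3.
  exact: (faces_gap Hn0 Hw Hw0 Hdelta gap Hs (min_gap _ _ min1) (max_gap _ _ max3)).
Qed.
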